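(* Let $H$ be any Hopf algebra over a field $k$ (not necessarily finite dimensional). Then every Hopf bimodule over $H$ can be embedded in an injective Hopf bimodule: for every Hopf bimodule $M$ there exist an injective object $J$ of the category $\mathcal{H}$ of Hopf bimodules over $H$ and an injective morphism of Hopf bimodules $M \hookrightarrow J$. In other words, $\mathcal{H}$ has enough injectives.
   Context: $H=(H,\mu,\eta,\Delta,\varepsilon,S)$ is a Hopf algebra over a commutative field $k$, and $\otimes=\otimes_k$. A Hopf bimodule over $H$ is a vector space $M$ that is an $H$-bimodule and an $H$-bicomodule (left coaction $m\mapsto m_{(-1)}\otimes m_{(0)}$, right coaction $m\mapsto m_{(0)}\otimes m_{(1)}$) such that both coactions are $H$-bimodule maps, where $H\otimes M$ and $M\otimes H$ carry the diagonal bimodule structures (equivalently, the actions are bicomodule maps). The category $\mathcal{H}$ has Hopf bimodules as objects and, as morphisms, linear maps that are simultaneously bimodule and bicomodule maps. An object $J$ of $\mathcal{H}$ is injective if $\mathrm{Hom}_{\mathcal{H}}(-,J)$ is exact. *)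

(* MathComp has no tensor product
   of (possibly infinite-dimensional) vector spaces, so elements of tensor
   products are represented by finite formal sums  sum_i a_i (x) b_i  (a list
   of pairs / triples), and two such representatives are identified exactly
   when they have the same image in the tensor product, i.e. (universal
   property of the tensor product) when every bilinear (resp. trilinear) map
   into every k-vector space takes the same value on them. *)
From HB Require Import structures.
From mathcomp Require Import all_boot all_order all_algebra.

Set Implicit Arguments.
Unset Strict Implicit.
Unset Printing Implicit Defensive.

Import Order.TTheory GRing.Theory Num.Theory.
Local Open Scope ring_scope.

Section Tensors.
Variable k : fieldType.

Definition klinear (A U : lmodType k) (f : A -> U) : Prop :=
  forall (c : k) (x y : A), f (c *: x + y) = c *: f x + f y.

Definition bilinear_map (A B U : lmodType k) (phi : A -> B -> U) : Prop :=
  (forall b : B, klinear (fun a => phi a b)) /\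
  (forall a : A, klinear (phi a)).

Definition trilinear_map (A B C U : lmodType k) (phi : A -> B -> C -> U) : Prop :=
  (forall (b : B) (c : C), klinear (fun a => phi a b c)) /\
  (forall (a : A) (c : C), klinear (fun b => phi a b c)) /\
  (forall (a : A) (b : B), klinear (phi a b)).

(* [:: (a_1,b_1); ...; (a_n,b_n)] represents  sum_i a_i (x) b_i  in A (x) B *)
Definition teq2 (A B : lmodType k) (s t : seq (A * B)) : Prop :=
  forall (U : lmodType k) (phi : A -> B -> U), bilinear_map phi ->
    \sum_(p <- s) phi p.1 p.2 = \sum_(p <- t) phi p.1 p.2.

(* [:: ((a_1,b_1),c_1); ...] represents  sum_i a_i (x) b_i (x) c_i  in A (x) B (x) C *)
Definition teq3 (A B C : lmodType k) (s t : seq (A * B * C)) : Prop :=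
  forall (U : lmodType k) (phi : A -> B -> C -> U), trilinear_map phi ->
    \sum_(p <- s) phi p.1.1 p.1.2 p.2 = \sum_(p <- t) phi p.1.1 p.1.2 p.2.

Definition tscale (A B : lmodType k) (c : k) (s : seq (A * B)) : seq (A * B) :=
  [seq (c *: p.1, p.2) | p <- s].

Definition tlinear (V A B : lmodType k) (f : V -> seq (A * B)) : Prop :=
  forall (c : k) (x y : V), teq2 (f (c *: x + y)) (tscale c (f x) ++ f y).

End Tensors.

Section Hopf.
Variable k : fieldType.

Record hopf_algebra (H : algType k) := HopfAlgebra {
  comul : H -> seq (H * H);
  counit : H -> k;
  antipode : H -> H;
  comul_lin : tlinear comul;
  comul_coassoc : forall h : H,
    teq3 [seq (q.1, q.2, p.2) | p <- comul h, q <- comul p.1]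
         [seq (p.1, q.1, q.2) | p <- comul h, q <- comul p.2];
  counit_lin : forall (c : k) (x y : H), counit (c *: x + y) = c * counit x + counit y;
  counit_l : forall h : H, \sum_(p <- comul h) counit p.1 *: p.2 = h;
  counit_r : forall h : H, \sum_(p <- comul h) counit p.2 *: p.1 = h;
  comul_mul : forall a b : H,
    teq2 (comul (a * b)) [seq (p.1 * q.1, p.2 * q.2) | p <- comul a, q <- comul b];
  comul_one : teq2 (comul 1) [:: (1, 1)];
  counit_mul : forall a b : H, counit (a * b) = counit a * counit b;
  counit_one : counit 1 = 1;
  antipode_lin : klinear antipode;
  antipode_l : forall h : H, \sum_(p <- comul h) antipode p.1 * p.2 = (counit h)%:A;
  antipode_r : forall h : H, \sum_(p <- comul h) p.1 * antipode p.2 = (counit h)%:A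
}.

Variables (H : algType k) (HA : hopf_algebra H).
Local Notation D := (comul HA).
Local Notation eps := (counit HA).

Record hopf_bimodule := HopfBimodule {
  hb_sort : lmodType k;
  lact : H -> hb_sort -> hb_sort;
  ract : hb_sort -> H -> hb_sort;
  lcoact : hb_sort -> seq (H * hb_sort);
  rcoact : hb_sort -> seq (hb_sort * H);
  lact_linl : forall m : hb_sort, klinear (fun h : H => lact h m);
  lact_linr : forall h : H, klinear (lact h);
  ract_linl : forall h : H, klinear (fun m : hb_sort => ract m h);
  ract_linr : forall m : hb_sort, klinear (ract m);
  lact_mul : forall (a b : H) (m : hb_sort), lact (a * b) m = lact a (lact b m);
  lact_one : forall m : hb_sort, lact 1 m = m;
  ract_mul : forall (m : hb_sort) (a b : H), ract m (a * b) = ract (ract m a) b;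
  ract_one : forall m : hb_sort, ract m 1 = m;
  lract : forall (a b : H) (m : hb_sort), ract (lact a m) b = lact a (ract m b);
  lcoact_lin : tlinear lcoact;
  rcoact_lin : tlinear rcoact;
  lcoact_coassoc : forall m : hb_sort,
    teq3 [seq (q.1, q.2, p.2) | p <- lcoact m, q <- D p.1]
         [seq (p.1, q.1, q.2) | p <- lcoact m, q <- lcoact p.2];
  lcoact_counit : forall m : hb_sort, \sum_(p <- lcoact m) eps p.1 *: p.2 = m;
  rcoact_coassoc : forall m : hb_sort,
    teq3 [seq (q.1, q.2, p.2) | p <- rcoact m, q <- rcoact p.1]
         [seq (p.1, q.1, q.2) | p <- rcoact m, q <- D p.2];
  rcoact_counit : forall m : hb_sort, \sum_(p <- rcoact m) eps p.2 *: p.1 = m;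
  bicomodule : forall m : hb_sort,
    teq3 [seq (q.1, q.2, p.2) | p <- rcoact m, q <- lcoact p.1]
         [seq (p.1, q.1, q.2) | p <- lcoact m, q <- rcoact p.2];
  (* both coactions are H-bimodule maps (diagonal structures on H (x) M, M (x) H) *)
  lcoact_lact : forall (h : H) (m : hb_sort),
    teq2 (lcoact (lact h m)) [seq (q.1 * p.1, lact q.2 p.2) | q <- D h, p <- lcoact m];
  lcoact_ract : forall (m : hb_sort) (h : H),
    teq2 (lcoact (ract m h)) [seq (p.1 * q.1, ract p.2 q.2) | p <- lcoact m, q <- D h];
  rcoact_lact : forall (h : H) (m : hb_sort),
    teq2 (rcoact (lact h m)) [seq (lact q.1 p.1, q.2 * p.2) | q <- D h, p <- rcoact m];
  rcoact_ract : forall (m : hb_sort) (h : H),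
    teq2 (rcoact (ract m h)) [seq (ract p.1 q.1, p.2 * q.2) | p <- rcoact m, q <- D h]
}.

Definition hb_morphism (M N : hopf_bimodule) (f : hb_sort M -> hb_sort N) : Prop :=
  [/\ klinear f,
      forall (h : H) (m : hb_sort M), f (lact h m) = lact h (f m),
      forall (m : hb_sort M) (h : H), f (ract m h) = ract (f m) h,
      forall m : hb_sort M, teq2 (lcoact (f m)) [seq (p.1, f p.2) | p <- lcoact m]
    & forall m : hb_sort M, teq2 (rcoact (f m)) [seq (f p.1, p.2) | p <- rcoact m]].

Definition short_exact (A B C : hopf_bimodule)
    (i : hb_sort A -> hb_sort B) (p : hb_sort B -> hb_sort C) : Prop :=
  [/\ hb_morphism i, hb_morphism p, injective i,
      (forall c : hb_sort C, exists b, p b = c)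
    & forall b : hb_sort B, p b = 0 <-> exists a, b = i a].

(* J is injective: Hom_H(-, J) is exact, i.e. it sends every short exact
   sequence 0 -> A -> B -> C -> 0 to an exact sequence
   0 -> Hom(C,J) -> Hom(B,J) -> Hom(A,J) -> 0 *)
Definition hb_injective (J : hopf_bimodule) : Prop :=
  forall (A B C : hopf_bimodule) (i : hb_sort A -> hb_sort B)
         (p : hb_sort B -> hb_sort C),
  short_exact i p ->
  [/\
      forall h : hb_sort C -> hb_sort J, hb_morphism h ->
        (forall b, h (p b) = 0) -> forall c, h c = 0,
      forall g : hb_sort B -> hb_sort J, hb_morphism g ->
        ((forall a, g (i a) = 0) <->
         exists h : hb_sort C -> hb_sort J, hb_morphism h /\ forall b, g b = h (p b))
    &
      forall g : hb_sort A -> hb_sort J, hb_morphism g ->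
        exists g' : hb_sort B -> hb_sort J, hb_morphism g' /\ forall a, g a = g' (i a)].

End Hopf.

(* For a vector space [V], the cofree Hopf bimodule
   [J(V) = H (x) Hom_k(H (x) H, V) (x) H], with the diagonal actions and the
   coactions of the outer factors, represents [Hom_k(-, V)]: a morphism
   [g : X -> J(V)] is determined by the linear map [counit \o g], and every linear
   [u : X -> V] arises this way.  Since every vector space is injective (Zorn's
   lemma), so is [J(V)]; and the morphism [M -> J(M)] corresponding to [id_M] is
   injective because its composite with the counit is the identity. *)

From HB Require Import structures.
From mathcomp Require Import all_boot all_order all_algebra.
From mathcomp Require Import boolp ring.
From mathcomp Require classical_sets.

Set Implicit Arguments.
Unset Strict Implicit.
Unset Printing Implicit Defensive.

Import Order.TTheory GRing.Theory Num.Theory.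
Local Open Scope ring_scope.

Section LinearMaps.
Variable k : fieldType.
Implicit Types (A B C U X : lmodType k).

Lemma klinearD A U (f : A -> U) : klinear f -> forall x y, f (x + y) = f x + f y.
Proof. by move=> Hf x y; rewrite -[x in LHS]scale1r Hf scale1r. Qed.

Lemma klinear0 A U (f : A -> U) : klinear f -> f 0 = 0.
Proof. by move=> Hf; apply/(addrI (f 0)); rewrite -klinearD // !addr0. Qed.

Lemma klinearZ A U (f : A -> U) : klinear f -> forall c x, f (c *: x) = c *: f x.
Proof. by move=> Hf c x; rewrite -[c *: x]addr0 Hf klinear0 // addr0. Qed.

Lemma klinear_sum A U (f : A -> U) I (r : seq I) (F : I -> A) :
  klinear f -> f (\sum_(i <- r) F i) = \sum_(i <- r) f (F i).
Proof.
move=> Hf; elim: r => [|i r IH]; first by rewrite !big_nil klinear0.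
by rewrite !big_cons klinearD // IH.
Qed.

Lemma klinear_id A : klinear (fun x : A => x).
Proof. by []. Qed.

Lemma klinear_comp A B U (f : A -> B) (g : B -> U) :
  klinear f -> klinear g -> klinear (fun x => g (f x)).
Proof. by move=> Hf Hg c x y; rewrite Hf Hg. Qed.

Lemma klinear_sumf A U I (r : seq I) (F : I -> A -> U) :
  (forall i, klinear (F i)) -> klinear (fun x => \sum_(i <- r) F i x).
Proof.
move=> HF c x y; rewrite scaler_sumr -big_split /=.
by apply: eq_bigr => i _; rewrite HF.
Qed.

Lemma klinear_scalef X U (f : X -> U) (d : k) :
  klinear f -> klinear (fun x => d *: f x).
Proof. by move=> Hf c x y; rewrite Hf scalerDr !scalerA mulrC. Qed.

Lemma klinear_mulrf (R : algType k) X (f : X -> R) (a : R) :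
  klinear f -> klinear (fun x => f x * a).
Proof. by move=> Hf c x y; rewrite Hf mulrDl scalerAl. Qed.

Lemma klinear_mullf (R : algType k) X (f : X -> R) (a : R) :
  klinear f -> klinear (fun x => a * f x).
Proof. by move=> Hf c x y; rewrite Hf mulrDr scalerAr. Qed.

Lemma klinear_bil1 X A B U (phi : A -> B -> U) (f : X -> A) b :
  bilinear_map phi -> klinear f -> klinear (fun x => phi (f x) b).
Proof. by move=> [H1 _] Hf c x y; rewrite Hf H1. Qed.

Lemma klinear_bil2 X A B U (phi : A -> B -> U) (f : X -> B) a :
  bilinear_map phi -> klinear f -> klinear (fun x => phi a (f x)).
Proof. by move=> [_ H2] Hf c x y; rewrite Hf H2. Qed.

Lemma klinear_tri1 X A B C U (phi : A -> B -> C -> U) (f : X -> A) b c :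
  trilinear_map phi -> klinear f -> klinear (fun x => phi (f x) b c).
Proof. by move=> [H1 _] Hf d x y; rewrite Hf H1. Qed.

Lemma klinear_tri2 X A B C U (phi : A -> B -> C -> U) (f : X -> B) a c :
  trilinear_map phi -> klinear f -> klinear (fun x => phi a (f x) c).
Proof. by move=> [_ [H2 _]] Hf d x y; rewrite Hf H2. Qed.

Lemma klinear_tri3 X A B C U (phi : A -> B -> C -> U) (f : X -> C) a b :
  trilinear_map phi -> klinear f -> klinear (fun x => phi a b (f x)).
Proof. by move=> [_ [_ H3]] Hf d x y; rewrite Hf H3. Qed.

Lemma bilinear_sum1 A B U (phi : A -> B -> U) y I (r : seq I) (G : I -> A) :
  bilinear_map phi -> phi (\sum_(i <- r) G i) y = \sum_(i <- r) phi (G i) y.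
Proof. by move=> [H1 _]; rewrite (klinear_sum _ _ (H1 y)). Qed.

Lemma bilinear_sum2 A B U (phi : A -> B -> U) x I (r : seq I) (G : I -> B) :
  bilinear_map phi -> phi x (\sum_(i <- r) G i) = \sum_(i <- r) phi x (G i).
Proof. by move=> [_ H2]; rewrite (klinear_sum _ _ (H2 x)). Qed.

End LinearMaps.

Section TensorRepresentatives.
Variable k : fieldType.
Implicit Types (A B C U V X : lmodType k).

Lemma teq2_sym A B (s t : seq (A * B)) : teq2 s t -> teq2 t s.
Proof. by move=> E U phi Hphi; rewrite E. Qed.

Lemma teq2_trans A B (s t u : seq (A * B)) : teq2 s t -> teq2 t u -> teq2 s u.
Proof. by move=> E1 E2 U phi Hphi; rewrite E1 // E2. Qed.

Lemma teq3_sym A B C (s t : seq (A * B * C)) : teq3 s t -> teq3 t s.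
Proof. by move=> E U phi Hphi; rewrite E. Qed.

Lemma teq3_trans A B C (s t u : seq (A * B * C)) :
  teq3 s t -> teq3 t u -> teq3 s u.
Proof. by move=> E1 E2 U phi Hphi; rewrite E1 // E2. Qed.

Lemma teq2_map2 A B B' (g : B -> B') (s t : seq (A * B)) :
  klinear g -> teq2 s t -> teq2 [seq (p.1, g p.2) | p <- s] [seq (p.1, g p.2) | p <- t].
Proof.
move=> Hg E U phi [H1 H2]; rewrite !big_map.
apply: (E _ (fun a b => phi a (g b))); split=> [b|a] c x y /=; first exact: H1.
by rewrite Hg H2.
Qed.

Lemma teq2_map1 A A' B (f : A -> A') (s t : seq (A * B)) :
  klinear f -> teq2 s t -> teq2 [seq (f p.1, p.2) | p <- s] [seq (f p.1, p.2) | p <- t].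
Proof.
move=> Hf E U phi [H1 H2]; rewrite !big_map.
apply: (E _ (fun a b => phi (f a) b)); split=> [b|a] c x y /=; last exact: H2.
by rewrite Hf H1.
Qed.

Lemma sum_tscale A B U (phi : A -> B -> U) c (s : seq (A * B)) :
  bilinear_map phi ->
  \sum_(p <- tscale c s) phi p.1 p.2 = c *: \sum_(p <- s) phi p.1 p.2.
Proof.
move=> [H1 _]; rewrite big_map scaler_sumr; apply: eq_bigr => p _ /=.
exact: (klinearZ (H1 p.2)).
Qed.

Lemma klinear_tlinear_sum V A B U (f : V -> seq (A * B)) (phi : A -> B -> U) :
  tlinear f -> bilinear_map phi -> klinear (fun v => \sum_(p <- f v) phi p.1 p.2).
Proof. by move=> Hf Hphi c x y; rewrite Hf // big_cat sum_tscale. Qed.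

Lemma teq2_sum A B U (s t : seq (A * B)) (F : A * B -> U) :
  teq2 s t -> bilinear_map (fun a b => F (a, b)) ->
  \sum_(p <- s) F p = \sum_(p <- t) F p.
Proof.
move=> E HF; have := E _ _ HF.
have uncurry r : \sum_(p <- r) F (p.1, p.2) = \sum_(p <- r) F p.
  by apply: eq_bigr => -[].
by rewrite /= !uncurry.
Qed.

Lemma teq3_sum A B C U (s t : seq (A * B * C)) (F : A * B * C -> U) :
  teq3 s t -> trilinear_map (fun a b c => F (a, b, c)) ->
  \sum_(p <- s) F p = \sum_(p <- t) F p.
Proof.
move=> E HF; have := E _ _ HF.
have uncurry r : \sum_(p <- r) F (p.1.1, p.1.2, p.2) = \sum_(p <- r) F p.
  by apply: eq_bigr => -[[]].
by rewrite /= !uncurry.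
Qed.

Lemma klinear_tlinear_sumf X V A B U (g : V -> seq (A * B)) (F : A * B -> U)
    (f : X -> V) :
  tlinear g -> bilinear_map (fun a b => F (a, b)) -> klinear f ->
  klinear (fun x => \sum_(q <- g (f x)) F q).
Proof.
move=> Hg HF Hf c x y; rewrite Hf.
have := klinear_tlinear_sum Hg HF c (f x) (f y).
have uncurry s : \sum_(q <- s) F (q.1, q.2) = \sum_(q <- s) F q.
  by apply: eq_bigr => -[].
by rewrite /= !uncurry.
Qed.

End TensorRepresentatives.

Section Tensor3.
Variables (k : fieldType) (A B C : lmodType k).
Implicit Types (U : lmodType k) (s t : seq (A * B * C)).

Definition tsum3 U (phi : A -> B -> C -> U) s : U := \sum_(p <- s) phi p.1.1 p.1.2 p.2.

Definition tscale3 (c : k) s : seq (A * B * C) := [seq (c *: p.1.1, p.1.2, p.2) | p <- s].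

Lemma tsum3_cat U phi s t : @tsum3 U phi (s ++ t) = tsum3 phi s + tsum3 phi t.
Proof. by rewrite /tsum3 big_cat. Qed.

Lemma tsum3_nil U phi : @tsum3 U phi [::] = 0.
Proof. by rewrite /tsum3 big_nil. Qed.

Lemma tsum3_scale U phi c s :
  trilinear_map phi -> @tsum3 U phi (tscale3 c s) = c *: tsum3 phi s.
Proof.
move=> [H1 _]; rewrite /tsum3 big_map scaler_sumr; apply: eq_bigr => p _ /=.
exact: (klinearZ (H1 p.1.2 p.2)).
Qed.

Record tensor3 := Tensor3 {
  tensor3_class : seq (A * B * C) -> Prop;
  tensor3_classP : exists s, tensor3_class = teq3 s }.

Definition tclass3 s : tensor3 := @Tensor3 (teq3 s) (ex_intro _ s erefl).

Definition trepr3 (x : tensor3) : seq (A * B * C) := projT1 (cid (tensor3_classP x)).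

Lemma tensor3_eq (x y : tensor3) : tensor3_class x = tensor3_class y -> x = y.
Proof.
case: x => P Px; case: y => Q Qx /= E; subst Q.
by rewrite (Prop_irrelevance Px Qx).
Qed.

Lemma trepr3K : cancel trepr3 tclass3.
Proof. by move=> x; apply: tensor3_eq; rewrite /trepr3; case: cid => s /= ->. Qed.

Lemma tclass3_eqP s t : tclass3 s = tclass3 t <-> teq3 s t.
Proof.
split=> [E|E]; first by have : tensor3_class (tclass3 s) t by rewrite E.
apply: tensor3_eq; apply: funext => r; apply: propext.
by split; [apply: teq3_trans (teq3_sym E) | apply: teq3_trans E].
Qed.

Lemma tsum3_repr U phi s :
  trilinear_map phi -> @tsum3 U phi (trepr3 (tclass3 s)) = tsum3 phi s.
Proof.
have /tclass3_eqP E : tclass3 (trepr3 (tclass3 s)) = tclass3 s by rewrite trepr3K.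
exact: E.
Qed.

HB.instance Definition _ := gen_eqMixin tensor3.
HB.instance Definition _ := gen_choiceMixin tensor3.

Definition tensor3_zero := tclass3 [::].
Definition tensor3_add x y := tclass3 (trepr3 x ++ trepr3 y).
Definition tensor3_opp x := tclass3 (tscale3 (-1) (trepr3 x)).
Definition tensor3_scale c x := tclass3 (tscale3 c (trepr3 x)).

Lemma tclass3_tsum s t :
  (forall U phi, trilinear_map phi -> @tsum3 U phi s = tsum3 phi t) -> tclass3 s = tclass3 t.
Proof. by move=> E; apply/tclass3_eqP => U phi /E. Qed.

Ltac tensor3_congr :=
  apply: tclass3_tsum => U phi Hphi;
  rewrite /= ?(tsum3_cat, tsum3_nil, tsum3_scale, tsum3_repr) //.

Lemma tensor3_addA : associative tensor3_add.
Proof. by move=> x y z; tensor3_congr; rewrite addrA. Qed.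

Lemma tensor3_addC : commutative tensor3_add.
Proof. by move=> x y; tensor3_congr; rewrite addrC. Qed.

Lemma tensor3_add0 : left_id tensor3_zero tensor3_add.
Proof. by move=> x; rewrite -[RHS]trepr3K; tensor3_congr; rewrite add0r. Qed.

Lemma tensor3_addN : left_inverse tensor3_zero tensor3_opp tensor3_add.
Proof. by move=> x; tensor3_congr; rewrite scaleN1r addNr. Qed.

HB.instance Definition _ :=
  GRing.isZmodule.Build tensor3 tensor3_addA tensor3_addC tensor3_add0 tensor3_addN.

Lemma tensor3_scaleA a b x : tensor3_scale a (tensor3_scale b x) = tensor3_scale (a * b) x.
Proof. by tensor3_congr; rewrite scalerA. Qed.

Lemma tensor3_scale1 : left_id 1 tensor3_scale.
Proof. by move=> x; rewrite -[RHS]trepr3K; tensor3_congr; rewrite scale1r. Qed.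

Lemma tensor3_scaleDr : right_distributive tensor3_scale +%R.
Proof. by move=> c x y; tensor3_congr; rewrite scalerDr. Qed.

Lemma tensor3_scaleDl x : {morph tensor3_scale^~ x : a b / a + b}.
Proof. by move=> a b; tensor3_congr; rewrite scalerDl. Qed.

HB.instance Definition _ := GRing.Zmodule_isLmodule.Build k tensor3
  tensor3_scaleA tensor3_scale1 tensor3_scaleDr tensor3_scaleDl.

Definition tmul3 a b c : tensor3 := tclass3 [:: (a, b, c)].

Definition tlift3 U (phi : A -> B -> C -> U) (x : tensor3) : U := tsum3 phi (trepr3 x).

Lemma tlift3_class U phi s : trilinear_map phi -> @tlift3 U phi (tclass3 s) = tsum3 phi s.
Proof. exact: tsum3_repr. Qed.

Lemma tlift3_tmul U phi a b c : trilinear_map phi -> @tlift3 U phi (tmul3 a b c) = phi a b c.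
Proof. by move=> Hphi; rewrite tlift3_class // /tsum3 big_seq1. Qed.

Lemma tlift3_linear U phi : trilinear_map phi -> klinear (@tlift3 U phi).
Proof.
move=> Hphi c x y; rewrite /tlift3.
rewrite -[c *: x + y]/(tclass3 (trepr3 (tclass3 (tscale3 c (trepr3 x))) ++ trepr3 y)).
by rewrite tsum3_repr // tsum3_cat tsum3_repr // tsum3_scale.
Qed.

Lemma tclass3_sum s : tclass3 s = \sum_(p <- s) tmul3 p.1.1 p.1.2 p.2.
Proof.
elim: s => [|p s IH]; first by rewrite big_nil.
rewrite big_cons -IH; tensor3_congr.
by rewrite /tsum3 big_cons big_seq1.
Qed.

Lemma tlift3_id x : tlift3 tmul3 x = x.
Proof. by rewrite /tlift3 /tsum3 -tclass3_sum trepr3K. Qed.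

Lemma tensor3_ext U (f g : tensor3 -> U) : klinear f -> klinear g ->
  (forall a b c, f (tmul3 a b c) = g (tmul3 a b c)) -> f =1 g.
Proof.
move=> Hf Hg E x; rewrite -(tlift3_id x) /tlift3 /tsum3 !klinear_sum //.
by apply: eq_bigr => p _; rewrite E.
Qed.

Lemma tmul3_trilinear : trilinear_map tmul3.
Proof.
split; [|split] => ? ? c x y; rewrite /tmul3; tensor3_congr;
  rewrite /tsum3 !big_cons !big_nil /= !addr0; case: Hphi => [H1 [H2 H3]].
- by rewrite H1.
- by rewrite H2.
- by rewrite H3.
Qed.

Lemma tmul3Z2 a c b d : tmul3 a (c *: b) d = c *: tmul3 a b d.
Proof. by case: tmul3_trilinear => _ [H2 _]; rewrite (klinearZ (H2 a d)). Qed.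

Lemma tlift3_sumf U I (r : seq I) (F : I -> A -> B -> C -> U) x :
  tlift3 (fun a b c => \sum_(i <- r) F i a b c) x = \sum_(i <- r) tlift3 (F i) x.
Proof. by rewrite /tlift3 /tsum3 exchange_big. Qed.

Lemma tlift3_scalef U (d : k) (phi : A -> B -> C -> U) x :
  tlift3 (fun a b c => d *: phi a b c) x = d *: tlift3 phi x.
Proof. by rewrite /tlift3 /tsum3 scaler_sumr. Qed.

Lemma tlift3_addf U (phi psi : A -> B -> C -> U) x :
  tlift3 (fun a b c => phi a b c + psi a b c) x = tlift3 phi x + tlift3 psi x.
Proof. by rewrite /tlift3 /tsum3 big_split. Qed.

Lemma eq_tlift3 U (phi psi : A -> B -> C -> U) x :
  (forall a b c, phi a b c = psi a b c) -> tlift3 phi x = tlift3 psi x.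
Proof. by move=> E; rewrite /tlift3 /tsum3; apply: eq_bigr => p _; rewrite E. Qed.

Lemma tlift3_sum U (phi : A -> B -> C -> U) I (r : seq I) (F : I -> tensor3) :
  trilinear_map phi -> tlift3 phi (\sum_(i <- r) F i) = \sum_(i <- r) tlift3 phi (F i).
Proof. by move=> Hphi; rewrite (klinear_sum _ _ (tlift3_linear Hphi)). Qed.

Lemma tlift3_sum2 U (phi : A -> B -> C -> U) I J (r : seq I) (s : I -> seq J)
    (f : I -> J -> A) (g : I -> J -> B) (h : I -> J -> C) :
  trilinear_map phi ->
  tlift3 phi (\sum_(i <- r) \sum_(j <- s i) tmul3 (f i j) (g i j) (h i j)) =
  \sum_(i <- r) \sum_(j <- s i) phi (f i j) (g i j) (h i j).
Proof.
move=> Hphi; rewrite tlift3_sum //; apply: eq_bigr => i _.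
by rewrite tlift3_sum //; apply: eq_bigr => j _; rewrite tlift3_tmul.
Qed.

End Tensor3.

Lemma tlift3_comp (k : fieldType) (A B C A' B' C' U : lmodType k)
    (psi : A' -> B' -> C' -> U) (phi : A -> B -> C -> tensor3 A' B' C') x :
  trilinear_map psi ->
  tlift3 psi (tlift3 phi x) = tlift3 (fun a b c => tlift3 psi (phi a b c)) x.
Proof.
move=> Hpsi; have -> : tlift3 phi x = \sum_(p <- trepr3 x) phi p.1.1 p.1.2 p.2 by [].
by rewrite (klinear_sum _ _ (tlift3_linear Hpsi)).
Qed.

Section BilinearMaps.
Variables (k : fieldType) (H : algType k) (V : lmodType k).

Record bilin := Bilin { bilin_fun : H -> H -> V; bilin_funP : bilinear_map bilin_fun }.

Lemma bilin_ext (f g : bilin) :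
  (forall a b, bilin_fun f a b = bilin_fun g a b) -> f = g.
Proof.
case: f => f fP; case: g => g gP /= E.
have Efg : f = g by apply: funext => a; apply: funext => b; apply: E.
by subst g; rewrite (Prop_irrelevance fP gP).
Qed.

HB.instance Definition _ := gen_eqMixin bilin.
HB.instance Definition _ := gen_choiceMixin bilin.

Lemma bilinear0 : bilinear_map (fun (_ _ : H) => (0 : V)).
Proof. by split=> ? c x y; rewrite scaler0 addr0. Qed.

Lemma bilinearD (f g : H -> H -> V) : bilinear_map f -> bilinear_map g ->
  bilinear_map (fun a b => f a b + g a b).
Proof.
move=> [F1 F2] [G1 G2]; split=> [b|a] c x y /=.
- by rewrite (F1 b) (G1 b) scalerDr addrACA.
- by rewrite (F2 a) (G2 a) scalerDr addrACA.
Qed.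

Lemma bilinearZ (d : k) (f : H -> H -> V) : bilinear_map f ->
  bilinear_map (fun a b => d *: f a b).
Proof.
move=> [F1 F2]; split=> [b|a] c x y /=.
- by rewrite (F1 b) scalerDr !scalerA mulrC.
- by rewrite (F2 a) scalerDr !scalerA mulrC.
Qed.

Definition bilin_zero := Bilin bilinear0.
Definition bilin_add f g := Bilin (bilinearD (bilin_funP f) (bilin_funP g)).
Definition bilin_scale d f := Bilin (bilinearZ d (bilin_funP f)).
Definition bilin_opp f := bilin_scale (-1) f.

Lemma bilin_addA : associative bilin_add.
Proof. by move=> f g h; apply: bilin_ext => a b /=; rewrite addrA. Qed.

Lemma bilin_addC : commutative bilin_add.
Proof. by move=> f g; apply: bilin_ext => a b /=; rewrite addrC. Qed.

Lemma bilin_add0 : left_id bilin_zero bilin_add.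
Proof. by move=> f; apply: bilin_ext => a b /=; rewrite add0r. Qed.

Lemma bilin_addN : left_inverse bilin_zero bilin_opp bilin_add.
Proof. by move=> f; apply: bilin_ext => a b /=; rewrite scaleN1r addNr. Qed.

HB.instance Definition _ :=
  GRing.isZmodule.Build bilin bilin_addA bilin_addC bilin_add0 bilin_addN.

Lemma bilin_scaleA a b f : bilin_scale a (bilin_scale b f) = bilin_scale (a * b) f.
Proof. by apply: bilin_ext => x y /=; rewrite scalerA. Qed.

Lemma bilin_scale1 : left_id 1 bilin_scale.
Proof. by move=> f; apply: bilin_ext => x y /=; rewrite scale1r. Qed.

Lemma bilin_scaleDr : right_distributive bilin_scale +%R.
Proof. by move=> c f g; apply: bilin_ext => x y /=; rewrite scalerDr. Qed.

Lemma bilin_scaleDl f : {morph bilin_scale^~ f : a b / a + b}.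
Proof. by move=> a b; apply: bilin_ext => x y /=; rewrite scalerDl. Qed.

HB.instance Definition _ := GRing.Zmodule_isLmodule.Build k bilin
  bilin_scaleA bilin_scale1 bilin_scaleDr bilin_scaleDl.

Lemma bilin_fun_sum I (r : seq I) (F : I -> bilin) a b :
  bilin_fun (\sum_(i <- r) F i) a b = \sum_(i <- r) bilin_fun (F i) a b.
Proof. by elim: r => [|i r IH]; rewrite ?big_nil ?big_cons //= -IH. Qed.

Lemma bilinear_mulr1 (a : H) (f : H -> H -> V) : bilinear_map f ->
  bilinear_map (fun x y => f (x * a) y).
Proof.
move=> [F1 F2]; split=> [b|x] c u v /=.
- by rewrite mulrDl -scalerAl (F1 b).
- by rewrite (F2 (x * a)).
Qed.

Lemma bilinear_mull2 (a : H) (f : H -> H -> V) : bilinear_map f ->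
  bilinear_map (fun x y => f x (a * y)).
Proof.
move=> [F1 F2]; split=> [b|x] c u v /=.
- by rewrite (F1 (a * b)).
- by rewrite mulrDr -scalerAr (F2 x).
Qed.

Definition blact (a : H) (f : bilin) : bilin := Bilin (bilinear_mulr1 a (bilin_funP f)).
Definition bract (f : bilin) (a : H) : bilin := Bilin (bilinear_mull2 a (bilin_funP f)).

Lemma blact_linl f : klinear (fun a => blact a f).
Proof.
move=> c x y; apply: bilin_ext => u v /=.
by case: (bilin_funP f) => F1 _; rewrite mulrDr -scalerAr (F1 v).
Qed.

Lemma blact_linr a : klinear (blact a).
Proof. by move=> c x y; apply: bilin_ext. Qed.

Lemma bract_linl a : klinear (fun f => bract f a).
Proof. by move=> c x y; apply: bilin_ext. Qed.

Lemma bract_linr f : klinear (bract f).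
Proof.
move=> c x y; apply: bilin_ext => u v /=.
by case: (bilin_funP f) => _ F2; rewrite mulrDl -scalerAl (F2 u).
Qed.

Lemma blactM a b f : blact (a * b) f = blact a (blact b f).
Proof. by apply: bilin_ext => u v /=; rewrite mulrA. Qed.

Lemma blact1 f : blact 1 f = f.
Proof. by apply: bilin_ext => u v /=; rewrite mulr1. Qed.

Lemma bractM f a b : bract f (a * b) = bract (bract f a) b.
Proof. by apply: bilin_ext => u v /=; rewrite mulrA. Qed.

Lemma bract1 f : bract f 1 = f.
Proof. by apply: bilin_ext => u v /=; rewrite mul1r. Qed.

Lemma bract_blact a b f : bract (blact a f) b = blact a (bract f b).
Proof. exact: bilin_ext. Qed.

End BilinearMaps.

Section LinearClosure.
Variable k : fieldType.
Implicit Types (A B C U V X : lmodType k).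

Lemma klinear_tmul1 X A B C (f : X -> A) (b : B) (c : C) :
  klinear f -> klinear (fun x => tmul3 (f x) b c).
Proof. by apply: klinear_tri1; apply: tmul3_trilinear. Qed.

Lemma klinear_tmul2 X A B C (f : X -> B) (a : A) (c : C) :
  klinear f -> klinear (fun x => tmul3 a (f x) c).
Proof. by apply: klinear_tri2; apply: tmul3_trilinear. Qed.

Lemma klinear_tmul3 X A B C (f : X -> C) (a : A) (b : B) :
  klinear f -> klinear (fun x => tmul3 a b (f x)).
Proof. by apply: klinear_tri3; apply: tmul3_trilinear. Qed.

Variable H : algType k.

Lemma klinear_blact1 V X (f : X -> H) (w : bilin H V) :
  klinear f -> klinear (fun x => blact (f x) w).
Proof. by move=> Hf c x y; rewrite Hf blact_linl. Qed.

Lemma klinear_blact2 V X (f : X -> bilin H V) (a : H) :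
  klinear f -> klinear (fun x => blact a (f x)).
Proof. by move=> Hf c x y; rewrite Hf blact_linr. Qed.

Lemma klinear_bract1 V X (f : X -> bilin H V) (a : H) :
  klinear f -> klinear (fun x => bract (f x) a).
Proof. by move=> Hf c x y; rewrite Hf bract_linl. Qed.

Lemma klinear_bract2 V X (f : X -> H) (w : bilin H V) :
  klinear f -> klinear (fun x => bract w (f x)).
Proof. by move=> Hf c x y; rewrite Hf bract_linr. Qed.

Variable HA : hopf_algebra H.
Local Notation D := (comul HA).
Local Notation eps := (counit HA).

Lemma klinear_counit_scalel X U (f : X -> H) (v : U) (d : k) :
  klinear f -> klinear (fun x => (eps (f x) * d) *: v).
Proof. by move=> Hf c x y; rewrite Hf counit_lin mulrDl scalerDl -mulrA scalerA. Qed.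

Lemma klinear_counit_scaler X U (f : X -> H) (v : U) (d : k) :
  klinear f -> klinear (fun x => (d * eps (f x)) *: v).
Proof. by move=> Hf c x y; rewrite Hf counit_lin mulrDr scalerDl mulrCA scalerA. Qed.

Lemma klinear_comul_sum X U (F : H * H -> U) (f : X -> H) :
  bilinear_map (fun a b => F (a, b)) -> klinear f ->
  klinear (fun x => \sum_(q <- D (f x)) F q).
Proof. by apply: klinear_tlinear_sumf; apply: comul_lin. Qed.

Lemma klinear_lact1 (M : hopf_bimodule HA) X (f : X -> H) (m : hb_sort M) :
  klinear f -> klinear (fun x => lact (f x) m).
Proof. by move=> Hf c x y; rewrite Hf lact_linl. Qed.

Lemma klinear_lact2 (M : hopf_bimodule HA) X (f : X -> hb_sort M) (h : H) :
  klinear f -> klinear (fun x => lact h (f x)).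
Proof. by move=> Hf c x y; rewrite Hf lact_linr. Qed.

Lemma klinear_ract2 (M : hopf_bimodule HA) X (f : X -> H) (m : hb_sort M) :
  klinear f -> klinear (fun x => ract m (f x)).
Proof. by move=> Hf c x y; rewrite Hf ract_linr. Qed.

End LinearClosure.

Create HintDb tlinear.
Create HintDb klinear.
#[export] Hint Resolve comul_lin lcoact_lin rcoact_lin : tlinear.

Ltac linearity := repeat match goal with
 | |- bilinear_map _ => split => ? /=
 | |- trilinear_map _ => split; [|split] => ? ? /=
 | |- klinear _ => first
    [ exact: klinear_id
    | solve [ eauto with klinear ]
    | apply: klinear_sumf => ? /=
    | apply: klinear_comul_sum
    | apply: klinear_tlinear_sumf; [ solve [eauto with tlinear] | | ]
    | apply: klinear_tmul1 | apply: klinear_tmul2 | apply: klinear_tmul3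
    | apply: klinear_mulrf | apply: klinear_mullf
    | apply: klinear_blact1 | apply: klinear_blact2
    | apply: klinear_bract1 | apply: klinear_bract2
    | apply: klinear_counit_scalel | apply: klinear_counit_scaler
    | apply: klinear_scalef
    | apply: klinear_bil1; [ solve [ assumption ] | ]
    | apply: klinear_bil2; [ solve [ assumption ] | ]
    | apply: klinear_tri1; [ solve [ assumption ] | ]
    | apply: klinear_tri2; [ solve [ assumption ] | ]
    | apply: klinear_tri3; [ solve [ assumption ] | ]
    | apply: klinear_lact1 | apply: klinear_lact2
    | apply: klinear_ract2
    | apply: klinear_comp; last solve [ eauto with klinear ] ]
 end.

Section SweedlerCalculus.
Variables (k : fieldType) (H : algType k) (HA : hopf_algebra H).
Local Notation D := (comul HA).
Local Notation eps := (counit HA).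
Implicit Types (U : lmodType k).

Lemma comul_sum_mul U (F : H * H -> U) a b :
  bilinear_map (fun x y => F (x, y)) ->
  \sum_(q <- D (a * b)) F q = \sum_(p <- D a) \sum_(q <- D b) F (p.1 * q.1, p.2 * q.2).
Proof. by move=> HF; rewrite (teq2_sum (comul_mul HA a b) HF) big_allpairs_dep. Qed.

Lemma comul_sum_one U (F : H * H -> U) :
  bilinear_map (fun x y => F (x, y)) -> \sum_(q <- D 1) F q = F (1, 1).
Proof. by move=> HF; rewrite (teq2_sum (comul_one HA) HF) big_seq1. Qed.

Lemma comul_sum_lin U (F : H * H -> U) c a b :
  bilinear_map (fun x y => F (x, y)) ->
  \sum_(q <- D (c *: a + b)) F q = c *: \sum_(q <- D a) F q + \sum_(q <- D b) F q.
Proof. by move=> HF; apply: (klinear_comul_sum HA HF (@klinear_id k H)). Qed.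

Lemma comul_sum_coassoc U (F : H -> H -> H -> U) h : trilinear_map F ->
  \sum_(p <- D h) \sum_(q <- D p.1) F q.1 q.2 p.2 =
  \sum_(p <- D h) \sum_(q <- D p.2) F p.1 q.1 q.2.
Proof. by move=> HF; have := comul_coassoc HA h HF; rewrite !big_allpairs_dep. Qed.

Lemma comul_sum_coassoc4 U (K : H -> H -> H -> H -> U) h :
  trilinear_map (fun x y z => \sum_(v <- D y) K x v.1 v.2 z) ->
  (forall x, trilinear_map (K x)) ->
  \sum_(q <- D h) \sum_(u <- D q.1) \sum_(v <- D u.2) K u.1 v.1 v.2 q.2 =
  \sum_(q <- D h) \sum_(u <- D q.2) \sum_(v <- D u.2) K q.1 u.1 v.1 v.2.
Proof.
move=> HK1 HK2.
rewrite (comul_sum_coassoc (F := fun x y z => \sum_(v <- D y) K x v.1 v.2 z)) //.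
by apply: eq_bigr => q _; apply: (comul_sum_coassoc (F := K q.1)).
Qed.

Lemma counit_sum_l U (G : H -> U) h : klinear G ->
  \sum_(p <- D h) eps p.1 *: G p.2 = G h.
Proof.
move=> HG; rewrite -{2}(counit_l HA h) klinear_sum //.
by apply: eq_bigr => p _; rewrite klinearZ.
Qed.

Lemma counit_sum_r U (G : H -> U) h : klinear G ->
  \sum_(p <- D h) eps p.2 *: G p.1 = G h.
Proof.
move=> HG; rewrite -{2}(counit_r HA h) klinear_sum //.
by apply: eq_bigr => p _; rewrite klinearZ.
Qed.

Lemma lcoact_counit_sum (M : hopf_bimodule HA) U (g : hb_sort M -> U) m :
  klinear g -> \sum_(q <- lcoact m) eps q.1 *: g q.2 = g m.
Proof.
move=> Hg; rewrite -{2}(lcoact_counit m) klinear_sum //.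
by apply: eq_bigr => q _; rewrite klinearZ.
Qed.

Lemma rcoact_counit_sum (M : hopf_bimodule HA) U (g : hb_sort M -> U) m :
  klinear g -> \sum_(q <- rcoact m) eps q.2 *: g q.1 = g m.
Proof.
move=> Hg; rewrite -{2}(rcoact_counit m) klinear_sum //.
by apply: eq_bigr => q _; rewrite klinearZ.
Qed.

End SweedlerCalculus.

Section CofreeHopfBimodule.
Variables (k : fieldType) (H : algType k) (HA : hopf_algebra H) (V : lmodType k).
Local Notation D := (comul HA).
Local Notation eps := (counit HA).
Local Notation W := (bilin H V).
Local Notation J := (tensor3 H W H).
Implicit Types (U : lmodType k) (m : J).

Definition lact_pure (a h : H) (w : W) (h' : H) : J :=
  \sum_(q <- D a) \sum_(r <- D q.2) tmul3 (q.1 * h) (blact r.1 w) (r.2 * h').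

Definition ract_pure (b h : H) (w : W) (h' : H) : J :=
  \sum_(q <- D b) \sum_(r <- D q.2) tmul3 (h * q.1) (bract w r.1) (h' * r.2).

Lemma lact_pure_trilinear a : trilinear_map (lact_pure a).
Proof. rewrite /lact_pure; linearity. Qed.

Lemma ract_pure_trilinear b : trilinear_map (ract_pure b).
Proof. rewrite /ract_pure; linearity. Qed.

Definition cofree_lact (a : H) m : J := tlift3 (lact_pure a) m.
Definition cofree_ract m (b : H) : J := tlift3 (ract_pure b) m.

Definition cofree_lcoact m : seq (H * J) :=
  [seq (q.1, tmul3 q.2 p.1.2 p.2) | p <- trepr3 m, q <- D p.1.1].

Definition cofree_rcoact m : seq (J * H) :=
  [seq (tmul3 p.1.1 p.1.2 q.1, q.2) | p <- trepr3 m, q <- D p.2].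

Lemma cofree_lact_linr a : klinear (cofree_lact a).
Proof. exact: tlift3_linear (lact_pure_trilinear a). Qed.

Lemma cofree_ract_linl b : klinear (cofree_ract^~ b).
Proof. exact: tlift3_linear (ract_pure_trilinear b). Qed.

Lemma cofree_lact_tmul a h w h' : cofree_lact a (tmul3 h w h') = lact_pure a h w h'.
Proof. exact/tlift3_tmul/lact_pure_trilinear. Qed.

Lemma cofree_ract_tmul b h w h' : cofree_ract (tmul3 h w h') b = ract_pure b h w h'.
Proof. exact/tlift3_tmul/ract_pure_trilinear. Qed.

Lemma cofree_lact_linl m : klinear (cofree_lact^~ m).
Proof.
move=> c a a'; rewrite /cofree_lact -tlift3_scalef -tlift3_addf.
by apply: eq_tlift3 => h w h'; rewrite /lact_pure comul_sum_lin //; linearity.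
Qed.

Lemma cofree_ract_linr m : klinear (cofree_ract m).
Proof.
move=> c a a'; rewrite /cofree_ract -tlift3_scalef -tlift3_addf.
by apply: eq_tlift3 => h w h'; rewrite /ract_pure comul_sum_lin //; linearity.
Qed.

Lemma cofree_lact_mul a b m :
  cofree_lact (a * b) m = cofree_lact a (cofree_lact b m).
Proof.
move: m; apply: tensor3_ext; first exact: cofree_lact_linr.
  exact: klinear_comp (cofree_lact_linr b) (cofree_lact_linr a).
move=> h w h'; rewrite !cofree_lact_tmul /lact_pure klinear_sum; last exact: cofree_lact_linr.
rewrite comul_sum_mul /=; last by linearity.
under eq_bigr => p _ do under eq_bigr => q _ do (rewrite comul_sum_mul /=; last by linearity).
under [RHS]eq_bigr => q _ do (rewrite klinear_sum; last exact: cofree_lact_linr).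
under [RHS]eq_bigr => q _ do under eq_bigr => r _ do rewrite cofree_lact_tmul /lact_pure.
under eq_bigr => p _ do under eq_bigr => q _ do rewrite exchange_big.
rewrite exchange_big; under eq_bigr => q _ do rewrite exchange_big.
apply: eq_bigr => q _; apply: eq_bigr => r _; apply: eq_bigr => p _.
by apply: eq_bigr => s _; rewrite !mulrA blactM.
Qed.

Lemma cofree_lact_one m : cofree_lact 1 m = m.
Proof.
move: m; apply: tensor3_ext => //; first exact: cofree_lact_linr.
move=> h w h'; rewrite cofree_lact_tmul /lact_pure comul_sum_one /=; last by linearity.
by rewrite comul_sum_one /=; [rewrite !mul1r blact1 | linearity].
Qed.

Lemma cofree_ract_mul m a b :
  cofree_ract m (a * b) = cofree_ract (cofree_ract m a) b.
Proof.
move: m; apply: tensor3_ext; first exact: cofree_ract_linl.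
  exact: klinear_comp (cofree_ract_linl a) (cofree_ract_linl b).
move=> h w h'; rewrite !cofree_ract_tmul /ract_pure.
rewrite (klinear_sum (f := cofree_ract^~ b)); last exact: cofree_ract_linl.
rewrite comul_sum_mul /=; last by linearity.
under eq_bigr => p _ do under eq_bigr => q _ do (rewrite comul_sum_mul /=; last by linearity).
under [RHS]eq_bigr => q _ do
  (rewrite (klinear_sum (f := cofree_ract^~ b)); last exact: cofree_ract_linl).
under [RHS]eq_bigr => q _ do under eq_bigr => r _ do rewrite cofree_ract_tmul /ract_pure.
under eq_bigr => p _ do rewrite exchange_big.
apply: eq_bigr => p _; apply: eq_bigr => r _; apply: eq_bigr => q _.
by apply: eq_bigr => s _; rewrite !mulrA bractM.
Qed.

Lemma cofree_ract_one m : cofree_ract m 1 = m.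
Proof.
move: m; apply: tensor3_ext => //; first exact: cofree_ract_linl.
move=> h w h'; rewrite cofree_ract_tmul /ract_pure comul_sum_one /=; last by linearity.
by rewrite comul_sum_one /=; [rewrite !mulr1 bract1 | linearity].
Qed.

Lemma cofree_lract a b m :
  cofree_ract (cofree_lact a m) b = cofree_lact a (cofree_ract m b).
Proof.
move: m; apply: tensor3_ext.
- exact: klinear_comp (cofree_lact_linr a) (cofree_ract_linl b).
- exact: klinear_comp (cofree_ract_linl b) (cofree_lact_linr a).
move=> h w h'; rewrite cofree_lact_tmul cofree_ract_tmul /lact_pure /ract_pure.
rewrite (klinear_sum (f := cofree_ract^~ b)); last exact: cofree_ract_linl.
rewrite (klinear_sum _ _ (cofree_lact_linr a)).
under eq_bigr => q _ do
  (rewrite (klinear_sum (f := cofree_ract^~ b)); last exact: cofree_ract_linl).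
under [RHS]eq_bigr => q _ do (rewrite klinear_sum; last exact: cofree_lact_linr).
under eq_bigr => q _ do under eq_bigr => r _ do rewrite cofree_ract_tmul /ract_pure.
under [RHS]eq_bigr => q _ do under eq_bigr => r _ do rewrite cofree_lact_tmul /lact_pure.
under eq_bigr => q _ do rewrite exchange_big.
under eq_bigr => q _ do under eq_bigr => q' _ do rewrite exchange_big.
rewrite exchange_big; under eq_bigr => q' _ do rewrite exchange_big.
apply: eq_bigr => q' _; apply: eq_bigr => r' _; apply: eq_bigr => q _.
by apply: eq_bigr => r _; rewrite !mulrA bract_blact.
Qed.

Lemma cofree_lcoact_sumE U (F : H -> J -> U) m :
  \sum_(p <- cofree_lcoact m) F p.1 p.2 =
  tlift3 (fun h w h' => \sum_(q <- D h) F q.1 (tmul3 q.2 w h')) m.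
Proof. by rewrite big_allpairs_dep. Qed.

Lemma cofree_rcoact_sumE U (F : J -> H -> U) m :
  \sum_(p <- cofree_rcoact m) F p.1 p.2 =
  tlift3 (fun h w h' => \sum_(q <- D h') F (tmul3 h w q.1) q.2) m.
Proof. by rewrite big_allpairs_dep. Qed.

Lemma cofree_lcoact_sum U (F : H * J -> U) m :
  \sum_(p <- cofree_lcoact m) F p =
  tlift3 (fun h w h' => \sum_(q <- D h) F (q.1, tmul3 q.2 w h')) m.
Proof. by rewrite -(cofree_lcoact_sumE (fun a b => F (a, b))); apply: eq_bigr => -[]. Qed.

Lemma cofree_rcoact_sum U (F : J * H -> U) m :
  \sum_(p <- cofree_rcoact m) F p =
  tlift3 (fun h w h' => \sum_(q <- D h') F (tmul3 h w q.1, q.2)) m.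
Proof. by rewrite -(cofree_rcoact_sumE (fun a b => F (a, b))); apply: eq_bigr => -[]. Qed.

Lemma cofree_lcoact_lin : tlinear cofree_lcoact.
Proof.
move=> c x y U F HF.
by rewrite big_cat sum_tscale // !cofree_lcoact_sumE tlift3_linear //; linearity.
Qed.

Lemma cofree_rcoact_lin : tlinear cofree_rcoact.
Proof.
move=> c x y U F HF.
by rewrite big_cat sum_tscale // !cofree_rcoact_sumE tlift3_linear //; linearity.
Qed.

Local Hint Resolve cofree_lcoact_lin cofree_rcoact_lin : tlinear.

Lemma cofree_lcoact_tmulE U (F : H -> J -> U) h w h' : bilinear_map F ->
  \sum_(p <- cofree_lcoact (tmul3 h w h')) F p.1 p.2 = \sum_(q <- D h) F q.1 (tmul3 q.2 w h').
Proof. by move=> HF; rewrite cofree_lcoact_sumE tlift3_tmul //; linearity. Qed.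

Lemma cofree_lcoact_tmul U (F : H * J -> U) h w h' :
  bilinear_map (fun a b => F (a, b)) ->
  \sum_(p <- cofree_lcoact (tmul3 h w h')) F p = \sum_(q <- D h) F (q.1, tmul3 q.2 w h').
Proof. by move=> /cofree_lcoact_tmulE <-; apply: eq_bigr => -[]. Qed.

Lemma cofree_rcoact_tmulE U (F : J -> H -> U) h w h' : bilinear_map F ->
  \sum_(p <- cofree_rcoact (tmul3 h w h')) F p.1 p.2 = \sum_(q <- D h') F (tmul3 h w q.1) q.2.
Proof. by move=> HF; rewrite cofree_rcoact_sumE tlift3_tmul //; linearity. Qed.

Lemma cofree_rcoact_tmul U (F : J * H -> U) h w h' :
  bilinear_map (fun a b => F (a, b)) ->
  \sum_(p <- cofree_rcoact (tmul3 h w h')) F p = \sum_(q <- D h') F (tmul3 h w q.1, q.2).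
Proof. by move=> /cofree_rcoact_tmulE <-; apply: eq_bigr => -[]. Qed.

Lemma cofree_lcoact_coassoc m :
  teq3 [seq (q.1, q.2, p.2) | p <- cofree_lcoact m, q <- D p.1]
       [seq (p.1, q.1, q.2) | p <- cofree_lcoact m, q <- cofree_lcoact p.2].
Proof.
move=> U F HF; rewrite !big_allpairs_dep /=.
apply: eq_bigr => -[[h w] h'] _ /=.
under [RHS]eq_bigr => q _ do (rewrite cofree_lcoact_tmul /=; last by linearity).
by rewrite (comul_sum_coassoc HA (F := fun x y z => F x y (tmul3 z w h'))) //; linearity.
Qed.

Lemma cofree_rcoact_coassoc m :
  teq3 [seq (q.1, q.2, p.2) | p <- cofree_rcoact m, q <- cofree_rcoact p.1]
       [seq (p.1, q.1, q.2) | p <- cofree_rcoact m, q <- D p.2].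
Proof.
move=> U F HF; rewrite !big_allpairs_dep /=.
apply: eq_bigr => -[[h w] h'] _ /=.
under eq_bigr => q _ do (rewrite cofree_rcoact_tmul /=; last by linearity).
by rewrite (comul_sum_coassoc HA (F := fun x y z => F (tmul3 h w x) y z)) //; linearity.
Qed.

Lemma cofree_lcoact_counit m : \sum_(p <- cofree_lcoact m) eps p.1 *: p.2 = m.
Proof.
rewrite (cofree_lcoact_sum (fun p => eps p.1 *: p.2)) -[RHS]tlift3_id.
apply: eq_tlift3 => h w h' /=.
by rewrite (counit_sum_l HA (G := fun y => tmul3 y w h')) //; linearity.
Qed.

Lemma cofree_rcoact_counit m : \sum_(p <- cofree_rcoact m) eps p.2 *: p.1 = m.
Proof.
rewrite (cofree_rcoact_sum (fun p => eps p.2 *: p.1)) -[RHS]tlift3_id.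
apply: eq_tlift3 => h w h' /=.
by rewrite (counit_sum_r HA (G := fun y => tmul3 h w y)) //; linearity.
Qed.

Lemma cofree_bicomodule m :
  teq3 [seq (q.1, q.2, p.2) | p <- cofree_rcoact m, q <- cofree_lcoact p.1]
       [seq (p.1, q.1, q.2) | p <- cofree_lcoact m, q <- cofree_rcoact p.2].
Proof.
move=> U F HF; rewrite !big_allpairs_dep /=.
apply: eq_bigr => -[[h w] h'] _ /=.
under eq_bigr => q _ do (rewrite cofree_lcoact_tmul /=; last by linearity).
under [RHS]eq_bigr => q _ do (rewrite cofree_rcoact_tmul /=; last by linearity).
by rewrite exchange_big.
Qed.

Lemma cofree_lcoact_lact h m :
  teq2 (cofree_lcoact (cofree_lact h m))
       [seq (q.1 * p.1, cofree_lact q.2 p.2) | q <- D h, p <- cofree_lcoact m].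
Proof.
move=> U F HF; rewrite cofree_lcoact_sumE [RHS]big_allpairs_dep /=.
rewrite /cofree_lact tlift3_comp /=; last by linearity.
under [RHS]eq_bigr => q _ do rewrite cofree_lcoact_sum /=.
rewrite -tlift3_sumf; apply: eq_tlift3 => a w a' /=.
rewrite /lact_pure tlift3_sum2 /=; last by linearity.
under [RHS]eq_bigr => q _ do under eq_bigr => r _ do (rewrite tlift3_tmul; last by linearity).
under eq_bigr => i _ do under eq_bigr => j _ do (rewrite comul_sum_mul /=; last by linearity).
under eq_bigr => i _ do rewrite exchange_big /=.
rewrite (comul_sum_coassoc HA (F := fun x y z => \sum_(v <- D z) \sum_(s <- D a)
   F (x * s.1) (tmul3 (y * s.2) (blact v.1 w) (v.2 * a')))) /=; last by linearity.
under [RHS]eq_bigr => q _ do under eq_bigr => r _ do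
  (rewrite (bilinear_sum2 _ _ _ HF); under eq_bigr => q0 _ do rewrite (bilinear_sum2 _ _ _ HF)).
under [RHS]eq_bigr => q _ do rewrite exchange_big /=.
under [RHS]eq_bigr => q _ do under eq_bigr => q0 _ do rewrite exchange_big /=.
apply: eq_bigr => q _; apply: eq_bigr => q0 _; apply: eq_bigr => r0 _.
by apply: eq_bigr => r _; rewrite ?mulrA.
Qed.

Lemma cofree_lcoact_ract m h :
  teq2 (cofree_lcoact (cofree_ract m h))
       [seq (p.1 * q.1, cofree_ract p.2 q.2) | p <- cofree_lcoact m, q <- D h].
Proof.
move=> U F HF; rewrite cofree_lcoact_sumE [RHS]big_allpairs_dep /=.
rewrite /cofree_ract tlift3_comp /=; last by linearity.
rewrite cofree_lcoact_sum /=; apply: eq_tlift3 => a w a' /=.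
rewrite /ract_pure tlift3_sum2 /=; last by linearity.
under [RHS]eq_bigr => q _ do under eq_bigr => r _ do (rewrite tlift3_tmul; last by linearity).
under eq_bigr => i _ do under eq_bigr => j _ do (rewrite comul_sum_mul /=; last by linearity).
under eq_bigr => q _ do rewrite exchange_big /=.
under eq_bigr => q _ do under eq_bigr => s _ do rewrite exchange_big /=.
under eq_bigr => q _ do rewrite exchange_big /=.
under eq_bigr => q _ do under eq_bigr => s _ do rewrite exchange_big /=.
rewrite (comul_sum_coassoc HA (F := fun x y z => \sum_(r <- D z) \sum_(s <- D a)
   F (s.1 * x) (tmul3 (s.2 * y) (bract w r.1) (a' * r.2)))) /=; last by linearity.
under [RHS]eq_bigr => q _ do under eq_bigr => r _ do
  (rewrite (bilinear_sum2 _ _ _ HF); under eq_bigr => q0 _ do rewrite (bilinear_sum2 _ _ _ HF)).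
rewrite [RHS]exchange_big /=.
under [RHS]eq_bigr => q _ do rewrite exchange_big /=.
under [RHS]eq_bigr => q _ do under eq_bigr => q0 _ do rewrite exchange_big /=.
apply: eq_bigr => q _; apply: eq_bigr => q0 _; apply: eq_bigr => r0 _.
by apply: eq_bigr => r _; rewrite ?mulrA.
Qed.

Lemma cofree_rcoact_lact h m :
  teq2 (cofree_rcoact (cofree_lact h m))
       [seq (cofree_lact q.1 p.1, q.2 * p.2) | q <- D h, p <- cofree_rcoact m].
Proof.
move=> U F HF; rewrite cofree_rcoact_sumE [RHS]big_allpairs_dep /=.
rewrite /cofree_lact tlift3_comp /=; last by linearity.
under [RHS]eq_bigr => q _ do rewrite cofree_rcoact_sum /=.
rewrite -tlift3_sumf; apply: eq_tlift3 => a w a' /=.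
rewrite /lact_pure tlift3_sum2 /=; last by linearity.
under [RHS]eq_bigr => q _ do under eq_bigr => r _ do (rewrite tlift3_tmul; last by linearity).
under eq_bigr => i _ do under eq_bigr => j _ do (rewrite comul_sum_mul /=; last by linearity).
under [RHS]eq_bigr => q _ do under eq_bigr => r _ do
  (rewrite (bilinear_sum1 _ _ _ HF); under eq_bigr => q0 _ do rewrite (bilinear_sum1 _ _ _ HF)).
under [RHS]eq_bigr => q _ do rewrite exchange_big /=.
under [RHS]eq_bigr => q _ do under eq_bigr => q0 _ do rewrite exchange_big /=.
rewrite (comul_sum_coassoc4 (HA := HA) (K := fun x1 x2 x3 x4 => \sum_(s <- D a')
   F (tmul3 (x1 * a) (blact x2 w) (x3 * s.1)) (x4 * s.2))) /=;
  [|linearity|move=> ?; linearity].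
apply: eq_bigr => q _; apply: eq_bigr => q0 _; apply: eq_bigr => r0 _.
by apply: eq_bigr => r _; rewrite ?mulrA.
Qed.

Lemma cofree_rcoact_ract m h :
  teq2 (cofree_rcoact (cofree_ract m h))
       [seq (cofree_ract p.1 q.1, p.2 * q.2) | p <- cofree_rcoact m, q <- D h].
Proof.
move=> U F HF; rewrite cofree_rcoact_sumE [RHS]big_allpairs_dep /=.
rewrite /cofree_ract tlift3_comp /=; last by linearity.
rewrite cofree_rcoact_sum /=; apply: eq_tlift3 => a w a' /=.
rewrite /ract_pure tlift3_sum2 /=; last by linearity.
under [RHS]eq_bigr => q _ do under eq_bigr => r _ do (rewrite tlift3_tmul; last by linearity).
under eq_bigr => i _ do under eq_bigr => j _ do (rewrite comul_sum_mul /=; last by linearity).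
under [RHS]eq_bigr => q _ do under eq_bigr => r _ do
  (rewrite (bilinear_sum1 _ _ _ HF); under eq_bigr => q0 _ do rewrite (bilinear_sum1 _ _ _ HF)).
rewrite [RHS]exchange_big /=.
under [RHS]eq_bigr => q _ do rewrite exchange_big /=.
under [RHS]eq_bigr => q _ do under eq_bigr => q0 _ do rewrite exchange_big /=.
rewrite (comul_sum_coassoc4 (HA := HA) (K := fun x1 x2 x3 x4 => \sum_(s <- D a')
   F (tmul3 (a * x1) (bract w x2) (s.1 * x3)) (s.2 * x4))) /=;
  [|linearity|move=> ?; linearity].
under eq_bigr => q _ do under eq_bigr => r _ do rewrite exchange_big /=.
apply: eq_bigr => q _; apply: eq_bigr => q0 _; apply: eq_bigr => r0 _.
by apply: eq_bigr => r _; rewrite ?mulrA.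
Qed.

Definition cofree : hopf_bimodule HA :=
  HopfBimodule cofree_lact_linl cofree_lact_linr cofree_ract_linl cofree_ract_linr
    cofree_lact_mul cofree_lact_one cofree_ract_mul cofree_ract_one cofree_lract
    cofree_lcoact_lin cofree_rcoact_lin
    cofree_lcoact_coassoc cofree_lcoact_counit cofree_rcoact_coassoc cofree_rcoact_counit
    cofree_bicomodule
    cofree_lcoact_lact cofree_lcoact_ract cofree_rcoact_lact cofree_rcoact_ract.

End CofreeHopfBimodule.

#[export] Hint Resolve cofree_lcoact_lin cofree_rcoact_lin : tlinear.

Section CofreeProperty.
Variables (k : fieldType) (H : algType k) (HA : hopf_algebra H) (V : lmodType k).
Local Notation D := (comul HA).
Local Notation eps := (counit HA).
Local Notation W := (bilin H V).
Local Notation J := (cofree HA V).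
Implicit Types (j : hb_sort J).

Definition cofree_proj j : W := tlift3 (fun h w h' => (eps h * eps h') *: w) j.

Definition cofree_counit j : V := bilin_fun (cofree_proj j) 1 1.

Lemma cofree_proj_trilinear :
  trilinear_map (fun (h : H) (w : W) h' => (eps h * eps h') *: w).
Proof. linearity. Qed.

Lemma cofree_proj_lin : klinear cofree_proj.
Proof. exact: tlift3_linear cofree_proj_trilinear. Qed.

Local Hint Resolve cofree_proj_lin : klinear.

Lemma cofree_counit_lin : klinear cofree_counit.
Proof. by move=> c x y; rewrite /cofree_counit cofree_proj_lin. Qed.

Lemma cofree_proj_tmul h w h' : cofree_proj (tmul3 h w h') = (eps h * eps h') *: w.
Proof. exact/tlift3_tmul/cofree_proj_trilinear. Qed.

Lemma cofree_proj_lact a j : cofree_proj (lact a j) = blact a (cofree_proj j).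
Proof.
move: j; apply: tensor3_ext.
- exact: klinear_comp (lact_linr a) cofree_proj_lin.
- exact: klinear_comp cofree_proj_lin (blact_linr a).
move=> h w h'; rewrite /= cofree_lact_tmul /lact_pure cofree_proj_tmul /cofree_proj.
rewrite tlift3_sum2 /=; last exact: cofree_proj_trilinear.
have scale4 (a1 a2 a3 a4 : k) (v : W) :
    ((a1 * a2) * (a3 * a4)) *: v = (a2 * a4) *: (a1 *: (a3 *: v)).
  by rewrite !scalerA; congr (_ *: _); ring.
under eq_bigr => q _ do under eq_bigr => r _ do rewrite !counit_mul scale4.
under eq_bigr => q _ do rewrite -scaler_sumr.
rewrite -scaler_sumr (klinearZ (blact_linr a)); congr (_ *: _).
under eq_bigr => q _ do rewrite -scaler_sumr (counit_sum_r HA _ (blact_linl w)).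
exact: (counit_sum_l HA _ (blact_linl w)).
Qed.

Lemma cofree_proj_ract j b : cofree_proj (ract j b) = bract (cofree_proj j) b.
Proof.
move: j; apply: tensor3_ext.
- exact: klinear_comp (ract_linl b) cofree_proj_lin.
- exact: klinear_comp cofree_proj_lin (bract_linl b).
move=> h w h'; rewrite /= cofree_ract_tmul /ract_pure cofree_proj_tmul /cofree_proj.
rewrite tlift3_sum2 /=; last exact: cofree_proj_trilinear.
have scale4 (a1 a2 a3 a4 : k) (v : W) :
    ((a1 * a2) * (a3 * a4)) *: v = (a1 * a3) *: (a2 *: (a4 *: v)).
  by rewrite !scalerA; congr (_ *: _); ring.
under eq_bigr => q _ do under eq_bigr => r _ do rewrite !counit_mul scale4.
under eq_bigr => q _ do rewrite -scaler_sumr.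
rewrite -scaler_sumr (klinearZ (bract_linl b)); congr (_ *: _).
under eq_bigr => q _ do rewrite -scaler_sumr (counit_sum_r HA _ (bract_linr w)).
exact: (counit_sum_l HA _ (bract_linr w)).
Qed.

Lemma bilin_fun_cofree_proj j a b :
  bilin_fun (cofree_proj j) a b = cofree_counit (lact a (ract j b)).
Proof. by rewrite /cofree_counit cofree_proj_lact cofree_proj_ract /= mul1r mulr1. Qed.

(* The counit property of both coactions, read backwards. *)
Lemma cofree_decompose j :
  j = \sum_(p <- lcoact j) \sum_(q <- rcoact p.2) tmul3 p.1 (cofree_proj q.1) q.2.
Proof.
rewrite /= cofree_lcoact_sum -{1}[j]tlift3_id; apply: eq_tlift3 => h w h' /=.
under eq_bigr => q _ do (rewrite cofree_rcoact_tmul /=; last by linearity).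
under eq_bigr => q _ do under eq_bigr => r _ do
  rewrite cofree_proj_tmul tmul3Z2 -scalerA.
under eq_bigr => q _ do
  (rewrite -scaler_sumr (counit_sum_l HA (G := fun y => tmul3 q.1 w y)); last by linearity).
by rewrite (counit_sum_r HA (G := fun y => tmul3 y w h')) //; linearity.
Qed.

Lemma hb_morphism_cofree_decompose (X : hopf_bimodule HA) (g : hb_sort X -> hb_sort J) :
  hb_morphism g -> forall x,
  g x = \sum_(p <- lcoact x) \sum_(q <- rcoact p.2) tmul3 p.1 (cofree_proj (g q.1)) q.2.
Proof.
case=> Hg _ _ Hl Hr x; rewrite {1}(cofree_decompose (g x)).
rewrite (teq2_sum (Hl x)) /= ?big_map; last by linearity.
apply: eq_bigr => p _; rewrite (teq2_sum (Hr p.2)) /= ?big_map //; linearity.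
Qed.

(* A morphism into [J] is determined by its composite with [cofree_counit]:
   that composite determines [cofree_proj \o g] through the bimodule structure,
   hence [g] itself by [hb_morphism_cofree_decompose]. *)
Lemma cofree_morphism_eq (X : hopf_bimodule HA) (g1 g2 : hb_sort X -> hb_sort J) :
  hb_morphism g1 -> hb_morphism g2 ->
  (forall x, cofree_counit (g1 x) = cofree_counit (g2 x)) -> g1 =1 g2.
Proof.
move=> Hg1 Hg2 E.
have Eproj x : cofree_proj (g1 x) = cofree_proj (g2 x).
  case: (Hg1) => _ L1 R1 _ _; case: (Hg2) => _ L2 R2 _ _.
  by apply: bilin_ext => a b; rewrite !bilin_fun_cofree_proj -R1 -R2 -L1 -L2.
move=> x; rewrite (hb_morphism_cofree_decompose Hg1) (hb_morphism_cofree_decompose Hg2).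
by apply: eq_bigr => p _; apply: eq_bigr => q _; rewrite Eproj.
Qed.

Section Lift.
Variables (X : hopf_bimodule HA) (u : hb_sort X -> V) (Hu : klinear u).
Local Hint Resolve Hu : klinear.

Lemma bilinear_act x : bilinear_map (fun a b => u (lact a (ract x b))).
Proof. linearity. Qed.

Definition bilin_of (x : hb_sort X) : W := Bilin (bilinear_act x).

Lemma bilin_of_lin : klinear bilin_of.
Proof. by move=> c x y; apply: bilin_ext => a b /=; rewrite ract_linl lact_linr Hu. Qed.

Local Hint Resolve bilin_of_lin : klinear.

Lemma bilin_of_lact h x : bilin_of (lact h x) = blact h (bilin_of x).
Proof. by apply: bilin_ext => a b /=; rewrite lract lact_mul. Qed.

Lemma bilin_of_ract x h : bilin_of (ract x h) = bract (bilin_of x) h.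
Proof. by apply: bilin_ext => a b /=; rewrite ract_mul. Qed.

Definition cofree_lift (x : hb_sort X) : hb_sort J :=
  \sum_(p <- lcoact x) \sum_(q <- rcoact p.2) tmul3 p.1 (bilin_of q.1) q.2.

Lemma cofree_lift_lin : klinear cofree_lift.
Proof. rewrite /cofree_lift; linearity. Qed.

Lemma cofree_lift_lact h x : cofree_lift (lact h x) = lact h (cofree_lift x).
Proof.
rewrite /cofree_lift (teq2_sum (lcoact_lact h x)) /= ?big_allpairs_dep /=; last by linearity.
under eq_bigr => q _ do under eq_bigr => p _ do
  ((rewrite (teq2_sum (rcoact_lact q.2 p.2)); last by linearity); rewrite big_allpairs_dep /=).
rewrite /cofree_lact tlift3_sum2 /=; last exact: lact_pure_trilinear.
rewrite /lact_pure exchange_big /=.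
under eq_bigr => p _ do under eq_bigr => q _ do rewrite exchange_big /=.
under eq_bigr => p _ do rewrite exchange_big /=.
apply: eq_bigr => p _; apply: eq_bigr => r _; apply: eq_bigr => q _.
by apply: eq_bigr => q' _; rewrite bilin_of_lact.
Qed.

Lemma cofree_lift_ract x h : cofree_lift (ract x h) = ract (cofree_lift x) h.
Proof.
rewrite /cofree_lift (teq2_sum (lcoact_ract x h)) /= ?big_allpairs_dep /=; last by linearity.
under eq_bigr => p _ do under eq_bigr => q _ do
  ((rewrite (teq2_sum (rcoact_ract p.2 q.2)); last by linearity); rewrite big_allpairs_dep /=).
rewrite /cofree_ract tlift3_sum2 /=; last exact: ract_pure_trilinear.
rewrite /ract_pure.
under eq_bigr => p _ do rewrite exchange_big /=.
apply: eq_bigr => p _; apply: eq_bigr => r _; apply: eq_bigr => q _.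
by apply: eq_bigr => q' _; rewrite bilin_of_ract.
Qed.

Lemma cofree_lift_lcoact x :
  teq2 (lcoact (cofree_lift x)) [seq (p.1, cofree_lift p.2) | p <- lcoact x].
Proof.
move=> U F HF; rewrite /= cofree_lcoact_sum /cofree_lift tlift3_sum2 /=; last by linearity.
rewrite big_map /=.
under [RHS]eq_bigr => p _ do (rewrite (bilinear_sum2 _ _ _ HF);
  under eq_bigr => s _ do rewrite (bilinear_sum2 _ _ _ HF)).
under eq_bigr => p _ do rewrite exchange_big /=.
have := teq3_sum (F := fun p => \sum_(q <- rcoact p.2) F p.1.1 (tmul3 p.1.2 (bilin_of q.1) q.2))
  (lcoact_coassoc x).
by rewrite !big_allpairs_dep /= => ->; last by linearity.
Qed.

Lemma cofree_lift_rcoact x :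
  teq2 (rcoact (cofree_lift x)) [seq (cofree_lift p.1, p.2) | p <- rcoact x].
Proof.
move=> U F HF; rewrite /= cofree_rcoact_sum /cofree_lift tlift3_sum2 /=; last by linearity.
rewrite big_map /=.
under [RHS]eq_bigr => p _ do (rewrite (bilinear_sum1 _ _ _ HF);
  under eq_bigr => s _ do rewrite (bilinear_sum1 _ _ _ HF)).
under eq_bigr => p _ do (
  have := teq3_sum (F := fun r => F (tmul3 p.1 (bilin_of r.1.1) r.1.2) r.2)
    (rcoact_coassoc p.2);
  rewrite !big_allpairs_dep /= => <-; last by linearity).
have := teq3_sum (F := fun r => \sum_(q <- rcoact r.1.2) F (tmul3 r.1.1 (bilin_of q.1) q.2) r.2)
  (bicomodule x).
by rewrite !big_allpairs_dep /= => <-; last by linearity.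
Qed.

Lemma cofree_lift_morphism : hb_morphism cofree_lift.
Proof.
split; [exact: cofree_lift_lin | exact: cofree_lift_lact | exact: cofree_lift_ract |
        exact: cofree_lift_lcoact | exact: cofree_lift_rcoact].
Qed.

Lemma cofree_counit_lift x : cofree_counit (cofree_lift x) = u x.
Proof.
rewrite /cofree_counit /cofree_lift /cofree_proj tlift3_sum2 /=; last by linearity.
rewrite bilin_fun_sum.
under eq_bigr => p _ do rewrite bilin_fun_sum.
under eq_bigr => p _ do under eq_bigr => q _ do rewrite /= lact_one ract_one -scalerA.
under eq_bigr => p _ do rewrite -scaler_sumr (rcoact_counit_sum _ Hu).
exact: lcoact_counit_sum.
Qed.

End Lift.

End CofreeProperty.

(* Every vector space is injective: by Zorn's lemma applied to the graphs of
   partial linear maps extending [u] along [i], a maximal one is total. *)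
Section LinearExtension.
Variables (k : fieldType) (A B V : lmodType k) (i : A -> B) (u : A -> V).
Hypotheses (Hi : klinear i) (i_inj : injective i) (Hu : klinear u).

Definition extension_graph (G : B * V -> Prop) : Prop :=
  [/\ forall b v v', G (b, v) -> G (b, v') -> v = v',
      forall c b1 v1 b2 v2, G (b1, v1) -> G (b2, v2) -> G (c *: b1 + b2, c *: v1 + v2)
    & forall a, G (i a, u a)].

Lemma extension_graph_base : extension_graph (fun bv => exists a, bv = (i a, u a)).
Proof.
split.
- by move=> b v v' [a [-> ->]] [a' [/i_inj -> ->]].
- move=> c b1 v1 b2 v2 [a1 [-> ->]] [a2 [-> ->]].
  by exists (c *: a1 + a2); rewrite Hi Hu.
- by move=> a; exists a.
Qed.

Lemma extension_graph0 G : extension_graph G -> G (0, 0).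
Proof. by case=> _ _ Gu; have := Gu 0; rewrite (klinear0 Hi) (klinear0 Hu). Qed.

Definition graph_adjoin (G : B * V -> Prop) (b : B) (bv : B * V) : Prop :=
  exists c b0 v0, G (b0, v0) /\ bv = (b0 + c *: b, v0).

Lemma extension_graph_adjoin G b :
  extension_graph G -> (forall v, ~ G (b, v)) -> extension_graph (graph_adjoin G b).
Proof.
move=> GG Gb; have [Gf Gl Gu] := GG; split.
- move=> b1 v v' [c [b0 [v0 [G1 [Eb1 ->]]]]] [c' [b0' [v0' [G1' [Eb1' ->]]]]].
  have [Ec|Nc] := eqVneq c c'.
    by apply: (Gf b0) G1 _; move: Eb1'; rewrite Eb1 -Ec => /addIr ->.
  (* otherwise [b] itself lies in the domain of [G] *)
  exfalso; apply: (Gb ((c' - c)^-1 *: (v0 - v0'))).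
  have Eb : (c' - c) *: b = b0 - b0'.
    have -> : b0 - b0' = (b0 + c *: b) - (b0' + c *: b).
      by rewrite opprD addrACA subrr addr0.
    by rewrite -Eb1 Eb1' opprD addrACA subrr add0r scalerBl.
  have -> : b = (c' - c)^-1 *: (b0 - b0').
    by rewrite -Eb scalerA mulVf ?scale1r // subr_eq0 eq_sym.
  have := Gl (c' - c)^-1 (b0 - b0') (v0 - v0') 0 0; rewrite !addr0; apply.
    have := Gl (-1) b0' v0' b0 v0 G1' G1; rewrite !scaleN1r.
    by rewrite (addrC (- b0')) (addrC (- v0')).
  exact: extension_graph0.
- move=> d b1 v1 b2 v2 [c1 [b01 [v01 [G1 [-> ->]]]]] [c2 [b02 [v02 [G2 [-> ->]]]]].
  exists (d * c1 + c2), (d *: b01 + b02), (d *: v01 + v02); split; first exact: Gl.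
  congr (_, _); rewrite scalerDr scalerDl scalerA.
  by rewrite -!addrA; congr (_ + _); rewrite addrCA.
- by move=> a; exists 0, (i a), (u a); rewrite scale0r addr0.
Qed.

Definition ext_graph := {G : B * V -> Prop | extension_graph G}.

Definition ext_graph_le (G1 G2 : ext_graph) : bool :=
  `[< forall bv, sval G1 bv -> sval G2 bv >].

Lemma ext_graph_chain_ub (C : ext_graph -> Prop) :
  classical_sets.total_on C ext_graph_le ->
  exists G, forall G', C G' -> ext_graph_le G' G.
Proof.
move=> Ctot.
have [[G0 CG0]|C0] := pselect (exists G, C G); last first.
  exists (exist _ _ extension_graph_base) => G' CG'.
  by exfalso; apply: C0; exists G'.
pose Un (bv : B * V) := exists G', C G' /\ sval G' bv.
have Cdir G1 G2 : C G1 -> C G2 -> exists G3, C G3 /\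
    (forall bv, sval G1 bv -> sval G3 bv) /\ (forall bv, sval G2 bv -> sval G3 bv).
  by move=> C1 C2; case: (Ctot G1 G2 C1 C2) => /asboolP le12; [exists G2 | exists G1].
have UnG : extension_graph Un.
  split.
  - move=> b v v' [G1 [C1 H1]] [G2 [C2 H2]].
    have [G3 [_ [S1 S2]]] := Cdir _ _ C1 C2.
    by case: (svalP G3) => G3f _ _; apply: (G3f b); [apply: S1 | apply: S2].
  - move=> c b1 v1 b2 v2 [G1 [C1 H1]] [G2 [C2 H2]].
    have [G3 [C3 [S1 S2]]] := Cdir _ _ C1 C2.
    exists G3; split => //.
    by case: (svalP G3) => _ G3l _; apply: G3l; [apply: S1 | apply: S2].
  - by move=> a; exists G0; split => //; case: (svalP G0).
by exists (exist _ Un UnG) => G' CG'; apply/asboolP => bv G'bv; exists G'.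
Qed.

Lemma ext_graph_maximal_total (G : ext_graph) :
  classical_sets.premaximal ext_graph_le G -> forall b, exists v, sval G (b, v).
Proof.
case: G => G GG Gmax b; apply: contrapT => Nb.
have Gb v : ~ G (b, v) by move=> Gbv; apply: Nb; exists v.
have le_adjoin : ext_graph_le (exist _ G GG)
                              (exist _ _ (extension_graph_adjoin GG Gb)).
  apply/asboolP => -[b0 v0] /= Gbv; exists 0, b0, v0.
  by rewrite scale0r addr0.
have /asboolP /= le_back := Gmax _ le_adjoin.
apply: (Gb 0); apply: le_back; exists 1, 0, 0; split; first exact: extension_graph0.
by rewrite scale1r add0r.
Qed.

Lemma klinear_extend : exists v : B -> V, klinear v /\ forall a, v (i a) = u a.
Proof.
have [G Gmax] : exists G, classical_sets.premaximal ext_graph_le G.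
  apply: (classical_sets.ZL_preorder (exist _ _ extension_graph_base)).
  - by move=> G; apply/asboolP.
  - move=> G1 G2 G3 /asboolP le12 /asboolP le23; apply/asboolP => bv /le12; exact: le23.
  - exact: ext_graph_chain_ub.
have /(_ _)/cid Gtot := ext_graph_maximal_total Gmax.
pose v b := projT1 (Gtot b).
have vP b : sval G (b, v b) by rewrite /v; case: (Gtot b).
case: (svalP G) => Gf Gl Gu; exists v; split.
- by move=> c x y; apply: (Gf (c *: x + y)); [apply: vP | apply: Gl; apply: vP].
- by move=> a; apply: (Gf (i a)); [apply: vP | apply: Gu].
Qed.

End LinearExtension.

Section InjectiveHopfBimodules.
Variables (k : fieldType) (H : algType k) (HA : hopf_algebra H).
Implicit Types (A B C J : hopf_bimodule HA).

Lemma hb_morphism_comp A B C (f : hb_sort A -> hb_sort B) (g : hb_sort B -> hb_sort C) :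
  hb_morphism f -> hb_morphism g -> hb_morphism (fun x => g (f x)).
Proof.
case=> Lf Af Rf Cf Df; case=> Lg Ag Rg Cg Dg; split.
- exact: klinear_comp Lf Lg.
- by move=> h m; rewrite Af Ag.
- by move=> m h; rewrite Rf Rg.
- move=> m; apply: teq2_trans (Cg (f m)) _.
  by have := teq2_map2 Lg (Cf m); rewrite -map_comp.
- move=> m; apply: teq2_trans (Dg (f m)) _.
  by have := teq2_map1 Lg (Df m); rewrite -map_comp.
Qed.

Lemma hb_morphism_factor A B C J (i : hb_sort A -> hb_sort B) (p : hb_sort B -> hb_sort C)
    (g : hb_sort B -> hb_sort J) :
  short_exact i p -> hb_morphism g -> (forall a, g (i a) = 0) ->
  exists h : hb_sort C -> hb_sort J, hb_morphism h /\ forall b, g b = h (p b).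
Proof.
move=> [_ [Lp Ap Rp Cp Dp] _ p_surj p_ker] [Lg Ag Rg Cg Dg] gi0.
have g_compat b b' : p b = p b' -> g b = g b'.
  move=> E; have : p (b + (-1) *: b') = 0 by rewrite (klinearD Lp) (klinearZ Lp) E scaleN1r subrr.
  case/p_ker => a Ea; have : g (b + (-1) *: b') = 0 by rewrite Ea gi0.
  by rewrite (klinearD Lg) (klinearZ Lg) scaleN1r => /eqP; rewrite subr_eq0 => /eqP.
pose s c := projT1 (cid (p_surj c)).
have sK c : p (s c) = c by rewrite /s; case: cid.
pose h c := g (s c).
have hp b : h (p b) = g b by apply: g_compat; rewrite sK.
have Lh : klinear h.
  move=> c x y.
  have -> : c *: h x + h y = h (p (c *: s x + s y)) by rewrite hp (klinearD Lg) (klinearZ Lg).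
  by rewrite (klinearD Lp) (klinearZ Lp) !sK.
exists h; split; last by move=> b; rewrite hp.
split => //.
- by move=> a c; rewrite -{1}(sK c) -Ap hp Ag.
- by move=> c a; rewrite -{1}(sK c) -Rp hp Rg.
- move=> c; apply: teq2_trans (Cg (s c)) _.
  have := teq2_map2 Lh (Cp (s c)); rewrite sK -map_comp => E.
  apply: teq2_trans (teq2_sym E) => U phi _.
  by rewrite !big_map; apply: eq_bigr => -[x y] _ /=; rewrite hp.
- move=> c; apply: teq2_trans (Dg (s c)) _.
  have := teq2_map1 Lh (Dp (s c)); rewrite sK -map_comp => E.
  apply: teq2_trans (teq2_sym E) => U phi _.
  by rewrite !big_map; apply: eq_bigr => -[x y] _ /=; rewrite hp.
Qed.

(* [Hom(-, J)] is always left exact. *)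
Lemma hb_injective_of_extension J :
  (forall A B (i : hb_sort A -> hb_sort B), hb_morphism i -> injective i ->
   forall g : hb_sort A -> hb_sort J, hb_morphism g ->
   exists g' : hb_sort B -> hb_sort J, hb_morphism g' /\ forall a, g a = g' (i a)) ->
  hb_injective J.
Proof.
move=> ext A B C i p ex_ip; have [Mi Mp i_inj p_surj p_ker] := ex_ip.
have pi0 a : p (i a) = 0 by apply/p_ker; exists a.
split.
- by move=> h _ hp0 c; have [b <-] := p_surj c; apply: hp0.
- move=> g Mg; split; first exact: hb_morphism_factor.
  by case=> h [[Lh _ _ _ _] E] a; rewrite E pi0 (klinear0 Lh).
- exact: ext.
Qed.

Lemma cofree_injective (V : lmodType k) : hb_injective (cofree HA V).
Proof.
apply: hb_injective_of_extension => A B i Mi i_inj g Mg.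
have Lu : klinear (fun a => cofree_counit (g a)).
  by case: Mg => Lg _ _ _ _; apply: klinear_comp Lg (@cofree_counit_lin _ _ HA V).
have [v [Lv Ev]] := klinear_extend (let: And5 Li _ _ _ _ := Mi in Li) i_inj Lu.
exists (cofree_lift Lv); split; first exact: cofree_lift_morphism.
apply: cofree_morphism_eq => //; first exact: hb_morphism_comp Mi (cofree_lift_morphism Lv).
by move=> a; rewrite cofree_counit_lift Ev.
Qed.

End InjectiveHopfBimodules.

Theorem theorem3p1 (k : fieldType) (H : algType k) (HA : hopf_algebra H)
    (M : hopf_bimodule HA) :
  exists (J : hopf_bimodule HA) (f : hb_sort M -> hb_sort J),
    hb_injective J /\ hb_morphism f /\ injective f.
Proof.
pose f := cofree_lift (@klinear_id k (hb_sort M)).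
exists (cofree HA (hb_sort M)), f; split; first exact: cofree_injective.
split; first exact: cofree_lift_morphism.
by move=> x y /(congr1 (@cofree_counit _ _ HA _)); rewrite !cofree_counit_lift.
Qed.
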